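(* Let $\varepsilon<\frac12$. There is no mechanism $M$ that simultaneously satisfies symmetry, invariance with respect to repetition of alternatives (IRA), and $\varepsilon$-Pareto efficiency in all equilibria, where all three properties refer to the set $NEO_M(A)$ of (possibly mixed) Nash equilibrium outcomes.
   Context: Two players bargain over a collection (multiset) $A=(a^k)_{k\in[n]}$ of alternatives $a^k\in[0,1]^2$, $a^k_i$ being player $i$'s utility. A mechanism $M=(M_n)_n$ specifies for each $n$ signal sets $\Sigma_1(n),\Sigma_2(n)$ and a map $f_n:\Sigma_1(n)\times\Sigma_2(n)\to\Delta([n])$; with risk-neutral players it induces a game $\Gamma_M(A)$ with expected-utility payoffs, and $NEO_M(A)\subseteq[0,1]^2$ is the set of Nash equilibrium outcomes (expected utility vectors). Symmetry: a collection is symmetric if for all $x_1,x_2$, $|\{k:a^k=(x_1,x_2)\}|=|\{k:a^k=(x_2,x_1)\}|$; a set $S$ is symmetric if $(x_1,x_2)\in S\Rightarrow(x_2,x_1)\in S$; $M$ is symmetric if $NEO_M(A)$ is symmetric for every symmetric collection $A$. IRA: for $A=(a_k)_{k\in[n]}$ and $j\in[n]$ let $(A,j)=(a_1,\dots,a_n,a_j)$; $M$ satisfies IRA if $NEO_M(A)=NEO_M((A,j))$ for all $A$ and $j$. $\varepsilon$-Pareto efficiency in all equilibria: for every $A$ and every $x\in NEO_M(A)$ there is no $a\in A$ with $a_1>x_1+\varepsilon$ and $a_2>x_2+\varepsilon$. *)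

From HB Require Import structures.
From mathcomp Require Import all_boot all_order all_algebra.
From mathcomp Require Import reals.
Set Implicit Arguments. Unset Strict Implicit. Unset Printing Implicit Defensive.
Import Order.TTheory GRing.Theory Num.Theory.
Local Open Scope ring_scope.

Section Bargaining.
Variable R : realType.

Definition is_dist (T : finType) (p : T -> R) : Prop :=
  (forall t, 0 <= p t) /\ \sum_(t : T) p t = 1.

Definition collection (n : nat) := 'I_n -> R * R.

Definition in_unit_square (n : nat) (A : collection n) : Prop :=
  forall k, 0 <= (A k).1 <= 1 /\ 0 <= (A k).2 <= 1.

Record mechanism := Mechanism {
  sig1 : nat -> finType;
  sig2 : nat -> finType;
  sig1_nonempty : forall n, (0 < n)%N -> (0 < #|sig1 n|)%N;
  sig2_nonempty : forall n, (0 < n)%N -> (0 < #|sig2 n|)%N;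
  outcome : forall n, sig1 n -> sig2 n -> 'I_n -> R;
  outcome_dist : forall n s1 s2, (0 < n)%N -> is_dist (@outcome n s1 s2)
}.

Variable M : mechanism.

(* expected utility of player i (i = false: player 1, i = true: player 2)
   under mixed strategies m1, m2 *)
Definition exp_util (n : nat) (A : collection n) (i : bool)
  (m1 : sig1 M n -> R) (m2 : sig2 M n -> R) : R :=
  \sum_(x1 : sig1 M n) \sum_(x2 : sig2 M n)
     m1 x1 * m2 x2 * \sum_(k < n) @outcome M n x1 x2 k * (if i then (A k).2 else (A k).1).

Definition is_NE (n : nat) (A : collection n)
  (m1 : sig1 M n -> R) (m2 : sig2 M n -> R) : Prop :=
  is_dist m1 /\ is_dist m2 /\
  (forall m1', is_dist m1' -> exp_util A false m1' m2 <= exp_util A false m1 m2) /\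
  (forall m2', is_dist m2' -> exp_util A true m1 m2' <= exp_util A true m1 m2).

Definition NEO (n : nat) (A : collection n) (x : R * R) : Prop :=
  exists m1 m2, is_NE A m1 m2 /\ x = (exp_util A false m1 m2, exp_util A true m1 m2).

Definition symmetric_collection (n : nat) (A : collection n) : Prop :=
  forall x1 x2 : R,
    #|[set k | A k == (x1, x2)]| = #|[set k | A k == (x2, x1)]|.

Definition symmetric_mechanism : Prop :=
  forall n (A : collection n), (0 < n)%N -> in_unit_square A ->
    symmetric_collection A ->
    forall x1 x2, NEO A (x1, x2) -> NEO A (x2, x1).

(* (A, j) = (a_1, ..., a_n, a_j) *)
Definition repeat_alt (n : nat) (A : collection n) (j : 'I_n) : collection n.+1 :=
  fun k => match unlift ord_max k with Some k' => A k' | None => A j end.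

Definition IRA : Prop :=
  forall n (A : collection n) (j : 'I_n), in_unit_square A ->
    forall x, NEO A x <-> NEO (repeat_alt A j) x.

Definition eps_pareto_all_eq (eps : R) : Prop :=
  forall n (A : collection n), (0 < n)%N -> in_unit_square A ->
    forall x, NEO A x ->
      ~ (exists k, x.1 + eps < (A k).1 /\ x.2 + eps < (A k).2).

End Bargaining.

(* The bargaining game over the two alternatives (1,0) and (0,1) is
   constant-sum, so by the minimax theorem it has an equilibrium outcome and
   that outcome is unique; symmetry forces it to be (1/2,1/2).  By IRA,
   repeating either alternative keeps this outcome, and in the game where
   (0,1) is repeated, player 1's equilibrium strategy guarantees probability
   at least 1/2 to the alternative (1,0) whatever player 2 does (and
   symmetrically for player 2 when (1,0) is repeated).  The collections
   ((1,0),(0,1),a) all have three alternatives, hence the same signal sets, so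
   the two guaranteeing strategies can be played against each other when
   a = (1,1): this is an equilibrium with outcome (1/2,1/2), which (1,1)
   dominates by 1/2 > eps.
   The minimax theorem is derived from Ville's theorem of the alternative,
   proved by Fourier-Motzkin elimination of one row at a time. *)

From HB Require Import structures.
From mathcomp Require Import all_boot all_order all_algebra.
From mathcomp Require Import reals.
Import Order.TTheory GRing.Theory Num.Theory.
Local Open Scope ring_scope.
From mathcomp Require Import classical_sets ring lra.
Set Implicit Arguments. Unset Strict Implicit. Unset Printing Implicit Defensive.

Section Ville.
Variable R : realFieldType.

Lemma sum_delta (I : finType) (P : {pred I}) (F : I -> R) i0 : i0 \in P ->
  \sum_(i in P) (i == i0)%:R * F i = F i0.
Proof.
move=> Pi0; rewrite (bigD1 i0) //= eqxx mul1r big1 ?addr0 // => i /andP[_].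
by move=> /negbTE->; rewrite mul0r.
Qed.

Lemma sum_deltaT (I : finType) (F : I -> R) i0 : \sum_i (i == i0)%:R * F i = F i0.
Proof. exact: (@sum_delta I predT). Qed.

Lemma norm_le_sum_norm (I : finType) (F : I -> R) i : `|F i| <= \sum_k `|F k|.
Proof. by rewrite (bigD1 i) //= lerDl sumr_ge0. Qed.

(* Only the rows in P take part, so that the proof can remove one row of P at
   a time. *)
Definition nonneg_row_comb (I J : finType) (A : I -> J -> R) (P : {set I}) :=
  exists x : I -> R, [/\ forall i, 0 <= x i, 0 < \sum_(i in P) x i
    & forall j, 0 <= \sum_(i in P) x i * A i j].

Definition neg_col_comb (I J : finType) (A : I -> J -> R) (P : {set I}) :=
  exists2 y : J -> R, forall j, 0 <= y j
    & forall i, i \in P -> \sum_j A i j * y j <= -1.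

Lemma fourier_motzkin_step (J : finType) (r phi : J -> R) k0 : r k0 < 0 ->
  (forall j, r j <= 0 -> 0 <= phi j) ->
  (forall j k, 0 < r j -> r k < 0 -> 0 <= - r k * phi j + r j * phi k) ->
  exists2 t, 0 <= t & forall j, 0 <= phi j + t * r j.
Proof.
move=> rk0 phi_ge0 phi_pair.
have [k rk min_k] := arg_minP (P := fun k => r k < 0) (fun k => phi k / - r k) rk0.
have nrk : 0 < - r k by rewrite oppr_gt0.
set t := phi k / - r k.
have phik : phi k = t * - r k by rewrite mulfVK ?gt_eqF.
exists t; first by rewrite divr_ge0 ?phi_ge0 ?ltW.
move=> j; case: (ltrgtP (r j) 0) => [rj|rj|rj].
- have : t * - r j <= phi j by rewrite -ler_pdivlMr ?oppr_gt0 // min_k.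
  by rewrite mulrN; lra.
- rewrite -(pmulr_rge0 _ nrk).
  suff -> : - r k * (phi j + t * r j) = - r k * phi j + r j * phi k by apply: phi_pair.
  by rewrite phik; ring.
- by rewrite rj mulr0 addr0 phi_ge0 ?rj.
Qed.

Section Elimination.
Variables (I J : finType) (A : I -> J -> R) (P : {set I}) (i0 : I) (k0 : J).
Hypotheses (Pi0 : i0 \in P) (Ak0 : A i0 k0 < 0).

(* Column (j, k) combines columns j and k so that its pivot entry is
   nonpositive; the pairs with A i0 j > 0 > A i0 k cancel it exactly. *)
Definition elim_coef (jk : J * J) : R * R :=
  if A i0 jk.1 <= 0 then (1, 0)
  else if A i0 jk.2 < 0 then (- A i0 jk.2, A i0 jk.1) else (0, 0).

Definition elim_row (i : I) (jk : J * J) : R :=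
  (elim_coef jk).1 * A i jk.1 + (elim_coef jk).2 * A i jk.2.

Lemma elim_coef_ge0 jk : 0 <= (elim_coef jk).1 /\ 0 <= (elim_coef jk).2.
Proof.
rewrite /elim_coef; case: ifPn => [_|]; first by rewrite ler01 lexx.
rewrite -ltNge => /ltW Aj; case: ifPn => [/ltW Ak|_] /=; last by rewrite lexx.
by rewrite oppr_ge0 Ak Aj.
Qed.

Lemma elim_row_pivot jk : elim_row i0 jk <= 0.
Proof.
rewrite /elim_row /elim_coef; case: ifPn => [|_] /=; first by rewrite mul1r mul0r addr0.
by case: ifP => _ /=; rewrite ?mul0r ?addr0 // mulNr mulrC addNr.
Qed.

Lemma nonneg_row_comb_elim :
  nonneg_row_comb elim_row (P :\ i0) -> nonneg_row_comb A P.
Proof.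
case=> x [x_ge0 sx cx].
pose phi j := \sum_(i in P :\ i0) x i * A i j.
have col jk : \sum_(i in P :\ i0) x i * elim_row i jk =
    (elim_coef jk).1 * phi jk.1 + (elim_coef jk).2 * phi jk.2.
  rewrite /phi !mulr_sumr -big_split; apply: eq_bigr => i _ /=.
  by rewrite /elim_row; ring.
have [t t_ge0 tP] : exists2 t, 0 <= t & forall j, 0 <= phi j + t * A i0 j.
  apply: (fourier_motzkin_step Ak0) => [j Aj|j k Aj Ak].
    by have := cx (j, j); rewrite col /elim_coef /= Aj mul1r mul0r addr0.
  by have := cx (j, k); rewrite col /elim_coef /= (lt_geF Aj) Ak.
pose x' i := if i == i0 then t else x i.
have x'E F : \sum_(i in P) x' i * F i = t * F i0 + \sum_(i in P :\ i0) x i * F i.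
  rewrite (big_setD1 _ Pi0) /x' eqxx; congr (_ + _); apply: eq_bigr => i.
  by rewrite in_setD1 => /andP[/negbTE ->].
exists x'; split.
- by move=> i; rewrite /x'; case: ifP.
- have := x'E (fun => 1); rewrite mulr1 (eq_bigr _ (fun i _ => mulr1 (x' i))).
  by rewrite (eq_bigr _ (fun i _ => mulr1 (x i))) => ->; apply: ltr_wpDl.
- by move=> j; rewrite (x'E (A ^~ j)) addrC; apply: tP.
Qed.

Lemma neg_col_comb_perturb (y0 : J -> R) : (forall l, 0 <= y0 l) ->
  (forall i, i \in P :\ i0 -> \sum_l A i l * y0 l <= -1) ->
  \sum_l A i0 l * y0 l <= 0 -> neg_col_comb A P.
Proof.
move=> y0_ge0 rows pivot.
(* A little of column k0 makes the pivot row reach -1; scaling y0 by lam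
   absorbs the damage this does to the other rows. *)
set m := - A i0 k0; have m_gt0 : 0 < m by rewrite oppr_gt0.
pose B := \sum_i `|A i k0|.
have B_ge0 : 0 <= B by apply: sumr_ge0.
set lam := 1 + B / m; have lam_ge1 : 1 <= lam by rewrite /lam lerDl divr_ge0 // ltW.
have lam_ge0 : 0 <= lam := le_trans ler01 lam_ge1.
exists (fun l => lam * y0 l + m^-1 * (l == k0)%:R).
  by move=> l; rewrite addr_ge0 ?mulr_ge0 ?y0_ge0 ?ler0n // invr_ge0 ltW.
move=> i Pi.
have -> : \sum_l A i l * (lam * y0 l + m^-1 * (l == k0)%:R) =
    lam * \sum_l A i l * y0 l + A i k0 / m.
  rewrite mulr_sumr -[A i k0 / m](sum_deltaT (fun l => A i l / m)) -big_split /=.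
  by apply: eq_bigr => l _; ring.
have [->|ni0] := eqVneq i i0.
  have : lam * \sum_l A i0 l * y0 l <= 0 by rewrite mulr_ge0_le0.
  suff -> : A i0 k0 / m = -1 by lra.
  by rewrite -[A i0 k0]opprK -/m mulNr divff ?gt_eqF.
have : lam * \sum_l A i l * y0 l <= - lam.
  by rewrite -mulrN1 ler_wpM2l ?rows ?in_setD1 ?ni0.
have : A i k0 / m <= B / m.
  by rewrite ler_pM2r ?invr_gt0 // (le_trans (ler_norm _) (norm_le_sum_norm _ i)).
rewrite /lam; lra.
Qed.

Lemma neg_col_comb_elim : neg_col_comb elim_row (P :\ i0) -> neg_col_comb A P.
Proof.
case=> y y_ge0 rows.
pose y0 l := \sum_jk y jk *
  ((elim_coef jk).1 * (l == jk.1)%:R + (elim_coef jk).2 * (l == jk.2)%:R).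
have row_y0 i : \sum_l A i l * y0 l = \sum_jk elim_row i jk * y jk.
  under eq_bigr do rewrite mulr_sumr.
  rewrite exchange_big /=; apply: eq_bigr => jk _.
  rewrite /elim_row -(sum_deltaT (A i) jk.1) -(sum_deltaT (A i) jk.2).
  rewrite !mulr_sumr mulrDl !mulr_suml -big_split /=.
  by apply: eq_bigr => l _; ring.
apply: (neg_col_comb_perturb (y0 := y0)).
- move=> l; apply: sumr_ge0 => jk _; have [c1 c2] := elim_coef_ge0 jk.
  by rewrite mulr_ge0 ?addr_ge0 ?mulr_ge0 ?ler0n.
- by move=> i Pi; rewrite row_y0 rows.
- rewrite row_y0; apply: sumr_le0 => jk _.
  by rewrite mulr_le0_ge0 ?elim_row_pivot.
Qed.

End Elimination.

Lemma nonneg_row_comb_delta (I J : finType) (A : I -> J -> R) (P : {set I}) i0 :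
  i0 \in P -> (forall j, 0 <= A i0 j) -> nonneg_row_comb A P.
Proof.
move=> Pi0 A_ge0; exists (fun i => (i == i0)%:R); split.
- by move=> i; rewrite ler0n.
- by have := sum_delta (fun => 1) Pi0; under eq_bigr do rewrite mulr1; move=> ->.
- by move=> j; rewrite (sum_delta (fun i => A i j)).
Qed.

Theorem ville_alternative (I J : finType) (A : I -> J -> R) (P : {set I}) :
  nonneg_row_comb A P \/ neg_col_comb A P.
Proof.
move: {2}#|P| (erefl #|P|) => n; elim: n J A P => [|n IH] J A P.
  move/eqP; rewrite cards_eq0 => /eqP ->; right.
  by exists (fun => 0) => // i; rewrite inE.
move=> cardP; have /card_gt0P [i0 Pi0] : (0 < #|P|)%N by rewrite cardP.
have cardP' : #|P :\ i0| = n by move: cardP; rewrite (cardsD1 i0) Pi0 => -[].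
have [/existsP [k0 Ak0]|/existsPn A_ge0] := boolP [exists k, A i0 k < 0].
  case: (IH _ (elim_row A i0) _ cardP') => [comb|comb].
    by left; apply: nonneg_row_comb_elim Pi0 Ak0 comb.
  by right; apply: neg_col_comb_elim Ak0 comb.
by left; apply: (nonneg_row_comb_delta Pi0) => j; rewrite leNgt A_ge0.
Qed.

End Ville.

Section Minimax.
Variable R : realType.

Lemma is_dist_delta (I : finType) (i0 : I) : is_dist (fun i => (i == i0)%:R : R).
Proof.
split=> [i|]; first by rewrite ler0n.
by have := sum_deltaT (fun => 1 : R) i0; under eq_bigr do rewrite mulr1.
Qed.

Lemma is_dist_normalize (I : finType) (x : I -> R) :
  (forall i, 0 <= x i) -> 0 < \sum_i x i -> is_dist (fun i => x i / \sum_i x i).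
Proof.
move=> x_ge0 sx; split=> [i|]; first by rewrite divr_ge0 ?x_ge0 ?ltW.
by rewrite -mulr_suml mulfV ?gt_eqF.
Qed.

Lemma sum_normalize (I : finType) (x F : I -> R) :
  \sum_i x i / (\sum_i x i) * F i = (\sum_i x i * F i) / \sum_i x i.
Proof. by rewrite mulr_suml; apply: eq_bigr => i _; rewrite mulrAC. Qed.

Lemma dist_avg_le (I : finType) (w F : I -> R) c :
  is_dist w -> (forall i, F i <= c) -> \sum_i w i * F i <= c.
Proof.
move=> [w_ge0 sw] Fc; rewrite -[c]mul1r -sw mulr_suml.
by apply: ler_sum => i _; rewrite ler_wpM2l.
Qed.

Lemma dist_avg_ge (I : finType) (w F : I -> R) c :
  is_dist w -> (forall i, c <= F i) -> c <= \sum_i w i * F i.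
Proof.
move=> [w_ge0 sw] Fc; rewrite -[c]mul1r -sw mulr_suml.
by apply: ler_sum => i _; rewrite ler_wpM2l.
Qed.

Lemma ville_dist (I J : finType) (A : I -> J -> R) (c : R) (i0 : I) :
  (exists2 x, is_dist x & forall j, c <= \sum_i x i * A i j) \/
  (exists y, exists2 d, 0 < d & is_dist y /\ forall i, \sum_j A i j * y j <= c - d).
Proof.
have sumT (F : I -> R) : \sum_(i in [set: I]) F i = \sum_i F i.
  by apply: eq_bigl => i; rewrite inE.
case: (ville_alternative (fun i j => A i j - c) [set: I]).
  case=> x []; rewrite sumT => x_ge0 sx cols; left.
  exists (fun i => x i / \sum_i x i); first exact: is_dist_normalize.
  move=> j; rewrite sum_normalize ler_pdivlMr //.
  have := cols j; rewrite sumT; under eq_bigr do rewrite mulrBr.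
  by rewrite sumrB -mulr_suml subr_ge0 mulrC.
case=> y y_ge0 rowsP; right.
have rows i : \sum_j (A i j - c) * y j <= -1 by apply: rowsP; rewrite inE.
have sy : 0 < \sum_j y j.
  rewrite lt_def sumr_ge0 // andbT; apply/negP => /eqP /psumr_eq0P y0.
  have := rows i0; rewrite big1 => [|j _]; last by rewrite y0 ?mulr0.
  lra.
exists (fun j => y j / \sum_j y j), (\sum_j y j)^-1; first by rewrite invr_gt0.
split; first exact: is_dist_normalize.
move=> i; have := rows i.
under eq_bigr do rewrite mulrBl; rewrite sumrB -mulr_sumr => row.
under eq_bigr do rewrite mulrA.
by rewrite -mulr_suml ler_pdivrMr // mulrBl mulVf ?gt_eqF //; lra.
Qed.

Lemma ville_dist_dual (I J : finType) (A : I -> J -> R) (c : R) (j0 : J) :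
  (exists2 y, is_dist y & forall i, \sum_j A i j * y j <= c) \/
  (exists x, exists2 d, 0 < d & is_dist x /\ forall j, c + d <= \sum_i x i * A i j).
Proof.
have [[y y_dist rows]|[x [d d_gt0 [x_dist cols]]]] :=
  ville_dist (fun j i => - A i j) (- c) j0.
  left; exists y => // i; have := rows i.
  by under eq_bigr do rewrite mulrN mulrC; rewrite sumrN lerN2.
right; exists x, d => //; split => // j; have := cols j.
under eq_bigr do rewrite mulNr mulrC; rewrite sumrN; lra.
Qed.

Definition payoff (I J : finType) (A : I -> J -> R) (x : I -> R) (y : J -> R) : R :=
  \sum_i \sum_j x i * y j * A i j.

Lemma payoff_le_rows (I J : finType) (A : I -> J -> R) x y c : is_dist x ->
  (forall i, \sum_j A i j * y j <= c) -> payoff A x y <= c.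
Proof.
move=> x_dist rows; rewrite /payoff.
under eq_bigr do under eq_bigr do rewrite -mulrA (mulrC (y _)).
by under eq_bigr do rewrite -mulr_sumr; apply: dist_avg_le.
Qed.

Lemma payoff_ge_cols (I J : finType) (A : I -> J -> R) x y c : is_dist y ->
  (forall j, c <= \sum_i x i * A i j) -> c <= payoff A x y.
Proof.
move=> y_dist cols; rewrite /payoff exchange_big /=.
under eq_bigr do under eq_bigr do rewrite mulrAC mulrC.
by under eq_bigr do rewrite -mulr_sumr; apply: dist_avg_ge.
Qed.

Lemma payoff_sum n (I J : finType) (F : 'I_n -> I -> J -> R) (c : 'I_n -> R) x y :
  payoff (fun i j => \sum_k F k i j * c k) x y = \sum_k payoff (F k) x y * c k.
Proof.
rewrite /payoff; under [RHS]eq_bigr do rewrite mulr_suml.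
rewrite [RHS]exchange_big /=; apply: eq_bigr => i _.
under [RHS]eq_bigr do rewrite mulr_suml.
rewrite [RHS]exchange_big /=; apply: eq_bigr => j _.
by rewrite mulr_sumr; apply: eq_bigr => k _; rewrite mulrA.
Qed.

Lemma payoff_const (I J : finType) (x : I -> R) (y : J -> R) c :
  is_dist x -> is_dist y -> payoff (fun _ _ => c) x y = c.
Proof.
move=> x_dist [y_ge0 sy]; apply/le_anti/andP; split.
  by apply: payoff_le_rows => // i; rewrite -mulr_sumr sy mulr1.
by apply: payoff_ge_cols => // j; apply: dist_avg_ge.
Qed.

Lemma guarantee_le (I J : finType) (A : I -> J -> R) x y c c' :
  is_dist x -> is_dist y -> (forall j, c <= \sum_i x i * A i j) ->
  (forall i, \sum_j A i j * y j <= c') -> c <= c'.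
Proof.
move=> x_dist y_dist cols rows.
exact: le_trans (payoff_ge_cols y_dist cols) (payoff_le_rows x_dist rows).
Qed.

Theorem mixed_saddle_point (I J : finType) (A : I -> J -> R) (i0 : I) (j0 : J) :
  exists x y, [/\ is_dist x, is_dist y,
    forall x', is_dist x' -> payoff A x' y <= payoff A x y &
    forall y', is_dist y' -> payoff A x y <= payoff A x y'].
Proof.
(* v is the supremum of the levels player 1 can guarantee; Ville's theorem
   shows that v is attained and that player 2 can hold player 1 down to v. *)
pose S : set R :=
  [set c | exists2 x, is_dist x & forall j, c <= \sum_i x i * A i j]%classic.
have S_lb : S (- \sum_j `|A i0 j|).
  exists (fun i => (i == i0)%:R); first exact: is_dist_delta.
  by move=> j; rewrite sum_deltaT lerNnormlW ?norm_le_sum_norm.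
have S_ub : ubound S (\sum_i `|A i j0|).
  move=> c [x x_dist cols]; apply: (guarantee_le x_dist (is_dist_delta j0) cols) => i.
  under eq_bigr do rewrite mulrC.
  by rewrite sum_deltaT (le_trans (ler_norm _) (norm_le_sum_norm _ i)).
have S_sup : has_sup S.
  by split; [exists (- \sum_j `|A i0 j|) | exists (\sum_i `|A i j0|)].
set v := sup S.
have [x x_dist cols] : S v.
  have [//|[y [d d_gt0 [y_dist rows]]]] := ville_dist A v i0.
  suff : v <= v - d by lra.
  apply: ge_sup; first by exists (- \sum_j `|A i0 j|).
  by move=> c [x x_dist cols]; apply: guarantee_le x_dist y_dist cols rows.
have [[y y_dist rows]|[x' [d d_gt0 [x'_dist cols']]]] := ville_dist_dual A v j0.
  exists x, y; split=> // [x' x'_dist|y' y'_dist].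
    exact: le_trans (payoff_le_rows x'_dist rows) (payoff_ge_cols y_dist cols).
  exact: le_trans (payoff_le_rows x_dist rows) (payoff_ge_cols y'_dist cols).
suff : v + d <= v by lra.
by apply: sup_upper_bound => //; exists x'.
Qed.

End Minimax.

Section MechanismGames.
Variables (R : realType) (M : mechanism R).

Definition lottery n (m1 : sig1 M n -> R) (m2 : sig2 M n -> R) (k : 'I_n) : R :=
  payoff (fun s1 s2 => outcome s1 s2 k) m1 m2.

Lemma exp_util_lottery n (A : collection R n) i
    (m1 : sig1 M n -> R) (m2 : sig2 M n -> R) :
  exp_util A i m1 m2 = \sum_k lottery m1 m2 k * (if i then (A k).2 else (A k).1).
Proof. exact: payoff_sum. Qed.

Lemma lottery_ge0 n (m1 : sig1 M n -> R) (m2 : sig2 M n -> R) k :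
  (0 < n)%N -> is_dist m1 -> is_dist m2 -> 0 <= lottery m1 m2 k.
Proof.
move=> n_gt0 [m1_ge0 _] m2_dist; apply: payoff_ge_cols => // s2.
apply: sumr_ge0 => s1 _; have [out_ge0 _] := outcome_dist s1 s2 n_gt0.
by rewrite mulr_ge0.
Qed.

Lemma sum_lottery n (m1 : sig1 M n -> R) (m2 : sig2 M n -> R) :
  (0 < n)%N -> is_dist m1 -> is_dist m2 -> \sum_k lottery m1 m2 k = 1.
Proof.
move=> n_gt0 m1_dist m2_dist; under eq_bigr do rewrite -[lottery _ _ _]mulr1.
rewrite -payoff_sum -[RHS](payoff_const 1 m1_dist m2_dist).
apply: eq_bigr => s1 _; apply: eq_bigr => s2 _; congr (_ * _).
by under eq_bigr do rewrite mulr1; have [_ ->] := outcome_dist s1 s2 n_gt0.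
Qed.

Definition constant_sum n (A : collection R n) := forall k, (A k).1 + (A k).2 = 1.

Section ConstantSum.
Variables (n : nat) (A : collection R n).
Hypotheses (A_const : constant_sum A) (n_gt0 : (0 < n)%N).

Lemma exp_util_constant_sum (m1 : sig1 M n -> R) (m2 : sig2 M n -> R) :
  is_dist m1 -> is_dist m2 ->
  exp_util A true m1 m2 = 1 - exp_util A false m1 m2.
Proof.
move=> m1_dist m2_dist.
rewrite !exp_util_lottery -(sum_lottery n_gt0 m1_dist m2_dist) -sumrB.
by apply: eq_bigr => k _; rewrite -[(A k).2](addKr (A k).1) A_const; ring.
Qed.

Lemma NEO_constant_sum x : NEO M A x -> x.1 + x.2 = 1.
Proof.
case=> m1 [m2 [[m1_dist [m2_dist _]] ->]] /=.
by rewrite exp_util_constant_sum // addrC subrK.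
Qed.

Lemma NE_guarantee1 (m1 : sig1 M n -> R) (m2 m2' : sig2 M n -> R) :
  is_NE A m1 m2 -> is_dist m2' ->
  exp_util A false m1 m2 <= exp_util A false m1 m2'.
Proof.
move=> [m1_dist [m2_dist [_ br2]]] m2'_dist; have := br2 m2' m2'_dist.
by rewrite !exp_util_constant_sum //; lra.
Qed.

Lemma NE_guarantee2 (m1 m1' : sig1 M n -> R) (m2 : sig2 M n -> R) :
  is_NE A m1 m2 -> is_dist m1' ->
  exp_util A true m1 m2 <= exp_util A true m1' m2.
Proof.
move=> [m1_dist [m2_dist [br1 _]]] m1'_dist; have := br1 m1' m1'_dist.
by rewrite !exp_util_constant_sum //; lra.
Qed.

Lemma constant_sum_NEO_uniq x x' : NEO M A x -> NEO M A x' -> x = x'.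
Proof.
move=> NEx NEx'; have := NEO_constant_sum NEx; have := NEO_constant_sum NEx'.
case: NEx NEx' => m1 [m2 [ne ->]] [m1' [m2' [ne' ->]]] /=.
have [m1_dist [m2_dist [br1 _]]] := ne; have [m1'_dist [m2'_dist [br1' _]]] := ne'.
have := le_trans (NE_guarantee1 ne m2'_dist) (br1' m1 m1_dist).
have := le_trans (NE_guarantee1 ne' m2_dist) (br1 m1' m1'_dist).
by move=> le1 le2 s' s; congr pair; lra.
Qed.

Lemma constant_sum_NEO_exists : exists x, NEO M A x.
Proof.
have /card_gt0P [s1 _] := sig1_nonempty M n_gt0.
have /card_gt0P [s2 _] := sig2_nonempty M n_gt0.
have [m1 [m2 [m1_dist m2_dist br1 br2]]] :=
  mixed_saddle_point (fun s1 s2 => \sum_k outcome s1 s2 k * (A k).1) s1 s2.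
exists (exp_util A false m1 m2, exp_util A true m1 m2), m1, m2; split=> //.
do 2![split=> //]; split=> [m1' m1'_dist|m2' m2'_dist]; first exact: br1.
have : exp_util A false m1 m2 <= exp_util A false m1 m2' := br2 m2' m2'_dist.
by rewrite !exp_util_constant_sum //; lra.
Qed.

End ConstantSum.

End MechanismGames.

Section Conflict.
Variables (R : realType) (M : mechanism R).

Definition conflict : collection R 2 := fun k => if k == ord0 then (1, 0) else (0, 1).

Definition extend n (A : collection R n) (a : R * R) : collection R n.+1 :=
  fun k => if unlift ord_max k is Some k' then A k' else a.

Lemma repeat_alt_extend n (A : collection R n) j : repeat_alt A j = extend A (A j).
Proof. by []. Qed.

Lemma constant_sum_conflict : constant_sum conflict.
Proof. by move=> k; rewrite /conflict; case: ifP => _ /=; rewrite ?addr0 ?add0r. Qed.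

Lemma constant_sum_extend n (A : collection R n) a :
  constant_sum A -> a.1 + a.2 = 1 -> constant_sum (extend A a).
Proof. by move=> A_const a_const k; rewrite /extend; case: unlift => [k'|]. Qed.

Lemma in_unit_square_conflict : in_unit_square conflict.
Proof. by move=> k; rewrite /conflict; case: ifP => _ /=; rewrite !ler01 !lexx. Qed.

Lemma in_unit_square_extend n (A : collection R n) a : in_unit_square A ->
  0 <= a.1 <= 1 -> 0 <= a.2 <= 1 -> in_unit_square (extend A a).
Proof. by move=> A_unit a1 a2 k; rewrite /extend; case: unlift => [k'|]. Qed.

Lemma symmetric_conflict : symmetric_collection conflict.
Proof.
move=> x1 x2; rewrite -(card_preimset _ (@rev_ord_inj 2)); apply: eq_card => k.
by rewrite !inE; case: k => [[|[|?]] ?] //=; rewrite !xpair_eqE andbC.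
Qed.

(* The alternatives of [extend conflict a] are (1,0), (0,1) and a, in this order. *)
Definition alt10 : 'I_3 := lift ord_max ord0.
Definition alt01 : 'I_3 := lift ord_max (lift ord0 ord0).

Lemma exp_util_conflict_extend a (m1 : sig1 M 3 -> R) (m2 : sig2 M 3 -> R) :
  exp_util (extend conflict a) false m1 m2 =
    lottery m1 m2 alt10 + lottery m1 m2 ord_max * a.1 /\
  exp_util (extend conflict a) true m1 m2 =
    lottery m1 m2 alt01 + lottery m1 m2 ord_max * a.2.
Proof.
split; rewrite exp_util_lottery (bigD1_ord ord_max) //= /extend unlift_none.
  by rewrite !big_ord_recl big_ord0 !liftK /= /alt10; ring.
by rewrite !big_ord_recl big_ord0 !liftK /= /alt01; ring.
Qed.

Lemma sum_lottery3 (m1 : sig1 M 3 -> R) (m2 : sig2 M 3 -> R) :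
  is_dist m1 -> is_dist m2 ->
  lottery m1 m2 alt10 + lottery m1 m2 alt01 + lottery m1 m2 ord_max = 1.
Proof.
move=> m1_dist m2_dist; rewrite -(@sum_lottery _ _ 3 m1 m2 isT m1_dist m2_dist).
by rewrite (bigD1_ord ord_max) //= !big_ord_recl big_ord0 /alt10 /alt01; ring.
Qed.

Lemma NEO_conflict_half : symmetric_mechanism M -> NEO M conflict (2^-1, 2^-1).
Proof.
move=> sym; have [[x1 x2] NEx] := constant_sum_NEO_exists M constant_sum_conflict isT.
have NEx' := sym 2 conflict isT in_unit_square_conflict symmetric_conflict _ _ NEx.
have /= sum_x := NEO_constant_sum constant_sum_conflict isT NEx.
have [x12 _] := constant_sum_NEO_uniq constant_sum_conflict isT NEx NEx'.
suff -> : (2^-1, 2^-1) = (x1, x2) :> R * R by [].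
by congr pair; lra.
Qed.

Lemma IRA_guarantee10 : IRA M -> NEO M conflict (2^-1, 2^-1) ->
  exists2 m1 : sig1 M 3 -> R, is_dist m1 &
    forall m2, is_dist m2 -> 2^-1 <= lottery m1 m2 alt10.
Proof.
move=> ira half.
have := (ira 2 conflict (lift ord0 ord0) in_unit_square_conflict _).1 half.
rewrite repeat_alt_extend /= => -[m1 [m2 [ne [e1 _]]]].
exists m1 => [|m2' m2'_dist]; first by case: ne.
have A_const : constant_sum (extend conflict (0, 1)).
  by apply: constant_sum_extend constant_sum_conflict _; rewrite add0r.
have := NE_guarantee1 A_const isT ne m2'_dist.
by rewrite -e1 (exp_util_conflict_extend _ m1 m2').1 /= mulr0 addr0.
Qed.

Lemma IRA_guarantee01 : IRA M -> NEO M conflict (2^-1, 2^-1) ->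
  exists2 m2 : sig2 M 3 -> R, is_dist m2 &
    forall m1, is_dist m1 -> 2^-1 <= lottery m1 m2 alt01.
Proof.
move=> ira half; have := (ira 2 conflict ord0 in_unit_square_conflict _).1 half.
rewrite repeat_alt_extend /= => -[m1 [m2 [ne [_ e2]]]].
exists m2 => [|m1' m1'_dist]; first by case: ne => _ [].
have A_const : constant_sum (extend conflict (1, 0)).
  by apply: constant_sum_extend constant_sum_conflict _; rewrite addr0.
have := NE_guarantee2 A_const isT ne m1'_dist.
by rewrite -e2 (exp_util_conflict_extend _ m1' m2).2 /= mulr0 addr0.
Qed.

Lemma NEO_conflict_extend11 (m1 : sig1 M 3 -> R) (m2 : sig2 M 3 -> R) :
  is_dist m1 -> is_dist m2 ->
  (forall m2', is_dist m2' -> 2^-1 <= lottery m1 m2' alt10) ->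
  (forall m1', is_dist m1' -> 2^-1 <= lottery m1' m2 alt01) ->
  NEO M (extend conflict (1, 1)) (2^-1, 2^-1).
Proof.
move=> m1_dist m2_dist g1 g2.
have u1 (m1' : sig1 M 3 -> R) (m2' : sig2 M 3 -> R) : is_dist m1' -> is_dist m2' ->
    exp_util (extend conflict (1, 1)) false m1' m2' = 1 - lottery m1' m2' alt01.
  move=> d1 d2; rewrite (exp_util_conflict_extend _ m1' m2').1 /= mulr1.
  by have := sum_lottery3 d1 d2; lra.
have u2 (m1' : sig1 M 3 -> R) (m2' : sig2 M 3 -> R) : is_dist m1' -> is_dist m2' ->
    exp_util (extend conflict (1, 1)) true m1' m2' = 1 - lottery m1' m2' alt10.
  move=> d1 d2; rewrite (exp_util_conflict_extend _ m1' m2').2 /= mulr1.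
  by have := sum_lottery3 d1 d2; lra.
have := g1 m2 m2_dist; have := g2 m1 m1_dist.
have := lottery_ge0 ord_max isT m1_dist m2_dist; have := sum_lottery3 m1_dist m2_dist.
move=> s q h01 h10; exists m1, m2; split; last by rewrite u1 ?u2 //; congr pair; lra.
do 2![split=> //]; split=> [m1' d1|m2' d2].
  by rewrite !u1 //; have := g2 m1' d1; lra.
by rewrite !u2 //; have := g1 m2' d2; lra.
Qed.

End Conflict.

Arguments conflict {R}.

Theorem theorem3 (R : realType) (eps : R) (heps : eps < 2^-1) :
  ~ exists M : mechanism R,
      [/\ symmetric_mechanism M, IRA M & eps_pareto_all_eq M eps].
Proof.
case=> M [sym ira par].
have half := NEO_conflict_half sym.
have [m1 m1_dist g1] := IRA_guarantee10 ira half.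
have [m2 m2_dist g2] := IRA_guarantee01 ira half.
have unit11 : in_unit_square (extend conflict (1, 1) : collection R 3).
  apply: in_unit_square_extend; rewrite /= ?ler01 ?lexx //.
  exact: in_unit_square_conflict.
apply: (par 3 _ isT unit11 _ (NEO_conflict_extend11 m1_dist m2_dist g1 g2)).
by exists ord_max; rewrite /extend unlift_none /=; lra.
Qed.
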